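(* Let $\|\cdot\|_1,\|\cdot\|_2$ be two ri norms whose fundamental functions $\phi_1,\phi_2$ are concave maps $[0,1]\to[0,1]$ with $\phi_i(0)=0$, $\phi_i(1)=1$, continuous at $0$. If the right derivatives $\phi_1'(0)$ and $\phi_2'(0)$ are finite, then the two norms are equivalent. In particular, every such norm is equivalent to the $\mathcal{L}^1$ norm $\|X\|_{\mathcal{L}^1}=\int_0^1|X|\,d\mu$.
   Context: $\Omega=[0,1]$ with Lebesgue measure $\mu$. An ri norm is $X\mapsto R(|X|)$, defined on $\{X: R(|X|)<\infty\}$, for a rearrangement invariant Banach function norm $R$ on nonnegative measurable functions, i.e. $R:\mathcal{M}^+\to[0,\infty]$ with $R(X)=0\iff X=0$, positive homogeneity, subadditivity, monotonicity, the Fatou property, $R(\chi_E)<\infty$ and $\int_EX\,d\mu\le c_ER(X)$ for constants $c_E$, normalisation $R(\chi_\Omega)=1$, and $R(X)=R(Y)$ for equimeasurable $X,Y$. Its fundamental function is $t\mapsto R(\chi_E)$ with $\mu(E)=t$. Two norms are equivalent if they define the same space and are bounded by constant multiples of each other on it. *)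

From HB Require Import structures.
From mathcomp Require Import all_boot all_order all_algebra.
From mathcomp Require Import all_classical all_reals all_analysis.
From mathcomp Require Import measurable_realfun.
Set Implicit Arguments. Unset Strict Implicit. Unset Printing Implicit Defensive.
Import Order.TTheory GRing.Theory Num.Theory.
Import numFieldNormedType.Exports.
Local Open Scope classical_set_scope.
Local Open Scope ring_scope.
Local Open Scope ereal_scope.

Section RI.
Variable R : realType.

Definition Omega : set R := `[0%R, 1%R]%classic.
Definition leb := (@lebesgue_measure R).

Definition ae_Omega (P : R -> Prop) : Prop :=
  leb.-negligible (Omega `&` [set x | ~ P x]).

Definition Mplus (X : R -> \bar R) : Prop :=
  measurable_fun Omega X /\ (forall x, 0 <= X x).

Definition indic_e (E : set R) : R -> \bar R := fun x => ((\1_E x : R)%:E).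

Definition equimeasurable (X Y : R -> \bar R) : Prop :=
  forall t : R, leb (Omega `&` [set x | t%:E < X x]) =
                leb (Omega `&` [set x | t%:E < Y x]).

Record ri_function_norm (N : (R -> \bar R) -> \bar R) : Prop := {
  rin_ge0 : forall X, Mplus X -> 0 <= N X;
  rin_eq0 : forall X, Mplus X -> (N X = 0 <-> ae_Omega (fun x => X x = 0));
  rin_homo : forall X (c : R), Mplus X -> (0 <= c)%R ->
     N (fun x => c%:E * X x) = c%:E * N X;
  rin_subadd : forall X Y, Mplus X -> Mplus Y ->
     N (fun x => X x + Y x) <= N X + N Y;
  rin_mono : forall X Y, Mplus X -> Mplus Y ->
     ae_Omega (fun x => X x <= Y x) -> N X <= N Y;
  rin_fatou : forall (Xn : nat -> R -> \bar R) X,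
     (forall n, Mplus (Xn n)) -> Mplus X ->
     ae_Omega (fun x => (forall n, Xn n x <= Xn n.+1 x) /\
                        (Xn n x @[n --> \oo] --> X x)) ->
     N (Xn n) @[n --> \oo] --> N X;
  rin_indic_fin : forall E, measurable E -> E `<=` Omega ->
     N (indic_e E) < +oo;
  rin_int : forall E, measurable E -> E `<=` Omega ->
     exists cE : R, forall X, Mplus X ->
       \int[leb]_(x in E) X x <= cE%:E * N X;
  rin_norm1 : N (indic_e Omega) = 1;
  rin_ri : forall X Y, Mplus X -> Mplus Y -> equimeasurable X Y -> N X = N Y
}.

Definition abs_e (X : R -> R) : R -> \bar R := fun x => (`|X x|)%:E.
Definition ri_norm (N : (R -> \bar R) -> \bar R) (X : R -> R) : \bar R :=
  N (abs_e X).

Definition ri_space (N : (R -> \bar R) -> \bar R) (X : R -> R) : Prop :=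
  measurable_fun Omega X /\ ri_norm N X < +oo.

(* fundamental function: t |-> N(chi_E) with mu(E) = t, E := [0,t] *)
Definition fundamental (N : (R -> \bar R) -> \bar R) (t : R) : R :=
  fine (N (indic_e `[0%R, t]%classic)).

Definition L1 (X : R -> \bar R) : \bar R := \int[leb]_(x in Omega) X x.

Definition equiv_norms (N1 N2 : (R -> \bar R) -> \bar R) : Prop :=
  (forall X, ri_space N1 X <-> ri_space N2 X) /\
  exists c C : R, (0 < c)%R /\ (0 < C)%R /\
    forall X, ri_space N1 X ->
      c%:E * ri_norm N1 X <= ri_norm N2 X /\ ri_norm N2 X <= C%:E * ri_norm N1 X.

Definition concave_on01 (f : R -> R) : Prop :=
  forall x y l : R, Omega x -> Omega y -> (0 <= l <= 1)%R ->
    (l * f x + (1 - l) * f y <= f (l * x + (1 - l) * y))%R.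

Definition good_fundamental (phi : R -> R) : Prop :=
  (forall t, Omega t -> Omega (phi t)) /\ concave_on01 phi /\
  phi 0%R = 0%R /\ phi 1%R = 1%R /\
  phi t @[t --> 0%R^'+] --> 0%R.

Definition finite_right_deriv0 (phi : R -> R) : Prop :=
  exists l : R, ((phi t - phi 0%R) / t)%R @[t --> 0%R^'+] --> l.

End RI.

From HB Require Import structures.
From mathcomp Require Import all_boot all_order all_algebra.
From mathcomp Require Import all_classical all_reals all_analysis.
From mathcomp Require Import measurable_realfun.
From mathcomp Require Import ring.
Import Order.TTheory GRing.Theory Num.Theory.
Import numFieldNormedType.Exports HBNNSimple.
Set Implicit Arguments. Unset Strict Implicit.
Local Open Scope classical_set_scope.
Local Open Scope ring_scope.

(* Concavity makes t |-> phi t / t nonincreasing on (0, 1], so a finite right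
   derivative l of phi at 0 bounds phi t by l t.  Rearrangement invariance
   gives N(1_A) = phi(mu A) <= l mu(A); by homogeneity and subadditivity this
   extends to N X <= l ||X||_1 for nonnegative simple X, and by the Fatou
   property to every X >= 0.  Conversely ||X||_1 <= c N X is the axiom
   int_Omega X <= c_Omega N X.  Both norms are thus equivalent to L^1, hence
   to each other. *)

Lemma Omega01 (R : realType) (t : R) : 0 <= t -> t <= 1 -> Omega t.
Proof. by rewrite /Omega /= in_itv /= => -> ->. Qed.

Lemma concave_le_rderiv0 (R : realType) (f : R -> R) (l : R) :
  concave_on01 f -> f 0 = 0 -> ((f t - f 0) / t) @[t --> 0^'+] --> l ->
  forall t, 0 <= t <= 1 -> f t <= l * t.
Proof.
move=> concf f0 f'0 t /andP[t0 t1].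
have [->|tn0] := eqVneq t 0; first by rewrite f0 mulr0.
have {t0 tn0} tp : 0 < t by rewrite lt_def tn0 t0.
rewrite -ler_pdivrMr //; apply: (cvgr_to_ge f'0); near=> s.
have s0 : 0 < s by near: s; exact: nbhs_right_gt.
have st : s < t by near: s; exact: nbhs_right_lt.
have lam01 : 0 <= s / t <= 1.
  by rewrite divr_ge0 ?(ltW s0) ?(ltW tp) //= ler_pdivrMr // mul1r (ltW st).
have := concf t 0 (s / t) (Omega01 (ltW tp) t1) (Omega01 (lexx 0) ler01) lam01.
rewrite f0 !mulr0 !addr0 divfK ?gt_eqF // => chord_le.
rewrite subr0 ler_pdivlMr // (_ : f t / t * s = s / t * f t) //; ring.
Unshelve. all: by end_near. Qed.

Lemma good_fundamental_le_linear (R : realType) (phi : R -> R) :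
  good_fundamental phi -> finite_right_deriv0 phi ->
  exists2 l : R, 0 < l & forall t, 0 <= t <= 1 -> phi t <= l * t.
Proof.
move=> [_ [concphi [phi0 [phi1 _]]]] [l phi'0].
have phi_le := concave_le_rderiv0 concphi phi0 phi'0.
exists l => //; apply: lt_le_trans ltr01 _.
by have := phi_le 1; rewrite phi1 mulr1; apply; rewrite ler01 lexx.
Qed.

Local Open Scope ereal_scope.

Section EquivNorms.
Variable R : realType.
Implicit Types N M : (R -> \bar R) -> \bar R.

Lemma equiv_norms_sym N M : equiv_norms N M -> equiv_norms M N.
Proof.
move=> [eqNM [c [C [c0 [C0 NM]]]]]; split=> [X|]; first by rewrite eqNM.
exists C^-1%R, c^-1%R; rewrite !invr_gt0; split=> //; split=> // X /eqNM MX.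
have [cNM NCM] := NM X MX; split.
  apply: le_trans (lee_wpmul2l _ NCM) _; first by rewrite lee_fin invr_ge0 ltW.
  by rewrite muleA -EFinM mulVf ?gt_eqF // mul1e.
rewrite -[leLHS]mul1e -(mulVf (lt0r_neq0 c0)) EFinM -muleA.
by apply: lee_wpmul2l; rewrite // lee_fin invr_ge0 ltW.
Qed.

Lemma equiv_norms_trans N M L :
  equiv_norms N M -> equiv_norms M L -> equiv_norms N L.
Proof.
move=> [eqNM [c [C [c0 [C0 NM]]]]] [eqML [d [D [d0 [D0 ML]]]]].
split=> [X|]; first by rewrite eqNM eqML.
exists (d * c)%R, (D * C)%R; rewrite !mulr_gt0 //; split=> //; split=> // X NX.
have [cNM NCM] := NM X NX; have [dML MDL] := ML X (proj1 (eqNM X) NX).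
rewrite !EFinM -!muleA; split.
  by apply: le_trans dML; apply: lee_wpmul2l; rewrite // lee_fin ltW.
by apply: le_trans MDL _; apply: lee_wpmul2l; rewrite // lee_fin ltW.
Qed.

Lemma Mplus_abs_e (X : R -> R) : measurable_fun (@Omega R) X -> Mplus (abs_e X).
Proof.
move=> mX; split=> [|x]; last by rewrite lee_fin.
by apply/measurable_EFinP; exact: measurableT_comp.
Qed.

Lemma le_scale_lty (x y : \bar R) (b : R) :
  x <= b%:E * y -> 0 <= y -> y < +oo -> x < +oo.
Proof.
move=> xby y0 ylty; apply: le_lt_trans xby _.
by case: y y0 ylty => // r _ _; rewrite -EFinM ltry.
Qed.

Lemma equiv_norms_of_bounds N M (a b : R) :
  (0 < a)%R -> (0 < b)%R ->
  (forall X, Mplus X -> 0 <= N X) -> (forall X, Mplus X -> 0 <= M X) ->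
  (forall X, Mplus X -> N X <= a%:E * M X) ->
  (forall X, Mplus X -> M X <= b%:E * N X) -> equiv_norms N M.
Proof.
move=> a0 b0 N0 M0 NaM MbN; split.
  move=> X; rewrite /ri_space /ri_norm.
  by split=> -[mX fin]; split=> //; have absX := Mplus_abs_e mX;
    [apply: le_scale_lty (MbN _ absX) (N0 _ absX) fin
    |apply: le_scale_lty (NaM _ absX) (M0 _ absX) fin].
exists a^-1%R, b; rewrite invr_gt0; split=> //; split=> // X [mX _].
have absX := Mplus_abs_e mX; rewrite /ri_norm; split; last exact: MbN.
apply: le_trans (lee_wpmul2l _ (NaM _ absX)) _; first by rewrite lee_fin invr_ge0 ltW.
by rewrite muleA -EFinM mulVf ?gt_eqF // mul1e.
Qed.

End EquivNorms.

Section RINorm.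
Variables (R : realType) (N : (R -> \bar R) -> \bar R).
Hypothesis normN : ri_function_norm N.
Local Notation Om := (@Omega R).

Lemma measurable_Omega : measurable Om.
Proof. exact: measurable_itv. Qed.

Lemma ae_OmegaW (P : R -> Prop) : (forall x, Om x -> P x) -> ae_Omega P.
Proof. by move=> allP; apply: (negligibleS _ (negligible_set0 _)) => x [/allP]. Qed.

Lemma Mplus_indic (A : set R) : measurable A -> Mplus (indic_e A).
Proof.
move=> mA; split=> [|x]; last by rewrite /indic_e lee_fin.
by apply/measurable_EFinP; exact: measurable_indic.
Qed.

Lemma lebesgue_Omega : leb Om = 1.
Proof. by rewrite /leb /Omega lebesgue_measure_itv /= lte_fin ltr01 oppr0 adde0. Qed.

Lemma lebesgue_itv0 (m : R) : (0 <= m)%R -> leb `[0%R, m] = m%:E.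
Proof.
move=> m0; rewrite /leb lebesgue_measure_itv /= lte_fin.
have [m_gt0|] := ltP 0%R m; first by rewrite oppr0 adde0.
by move=> m_le0; rewrite (@le_anti _ _ m 0%R) ?m0 ?m_le0.
Qed.

Lemma lebesgue_sub_Omega (B : set R) : measurable B -> B `<=` Om ->
  leb B = (fine (leb B))%:E /\ (0 <= fine (leb B) <= 1)%R.
Proof.
move=> mB BOm; have B_le1 : leb B <= 1.
  by rewrite -lebesgue_Omega; apply: le_measure; rewrite ?inE //; exact: measurable_Omega.
have B_ge0 : 0 <= leb B by exact: measure_ge0.
have finB : leb B \is a fin_num by rewrite ge0_fin_numE // (le_lt_trans B_le1) ?ltry.
by rewrite fineK // -!lee_fin fineK // B_ge0 B_le1.
Qed.

Lemma itv0_sub_Omega (m : R) : (m <= 1)%R -> `[0%R, m] `<=` Om.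
Proof.
by move=> m1 x; rewrite /Omega /= !in_itv /= => /andP[-> /le_trans->].
Qed.

Lemma Omega_indic_gt (C : set R) (t : R) : C `<=` Om ->
  Om `&` [set x | t%:E < indic_e C x] =
  if (t < 0)%R then Om else if (t < 1)%R then C else set0.
Proof.
move=> COm; apply/seteqP; split=> x /=; rewrite /indic_e indicE lte_fin.
  move=> [Omx]; case: (boolP (x \in C)) => [/set_mem Cx|_] /=.
    by case: ifP => // _ ->.
  by move=> ->.
case: ifP => [t_lt0 Omx|_]; first by split=> //; apply: lt_le_trans t_lt0 _.
by case: ifP => // t_lt1 Cx; split; [exact: COm|rewrite mem_set].
Qed.

Lemma equimeasurable_indic_itv0 (B : set R) : measurable B -> B `<=` Om ->
  equimeasurable (indic_e B) (indic_e `[0%R, fine (leb B)]).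
Proof.
move=> mB BOm t; have [finB /andP[B0 B1]] := lebesgue_sub_Omega mB BOm.
rewrite !Omega_indic_gt //; last exact: itv0_sub_Omega.
by case: ifP => // _; case: ifP => // _; rewrite lebesgue_itv0.
Qed.

Lemma ri_indicE (B : set R) : measurable B -> B `<=` Om ->
  N (indic_e B) = (fundamental N (fine (leb B)))%:E.
Proof.
move=> mB BOm; have [_ /andP[_ B1]] := lebesgue_sub_Omega mB BOm.
have mI : measurable `[0%R, fine (leb B)] by exact: measurable_itv.
have equiB := equimeasurable_indic_itv0 mB BOm.
rewrite (rin_ri normN (Mplus_indic mB) (Mplus_indic mI) equiB).
rewrite /fundamental fineK // ge0_fin_numE ?(rin_ge0 normN (Mplus_indic mI)) //.
exact: rin_indic_fin normN _ mI (itv0_sub_Omega B1).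
Qed.

Lemma ri_indicI (A : set R) : measurable A -> N (indic_e A) = N (indic_e (A `&` Om)).
Proof.
move=> mA; have mAOm : measurable (A `&` Om) by apply: measurableI => //; exact: measurable_Omega.
have eqOm x : Om x -> indic_e A x = indic_e (A `&` Om) x.
  by move=> Omx; rewrite /indic_e !indicE in_setI (mem_set Omx) andbT.
by apply/le_anti/andP; split; apply: rin_mono => //; try exact: Mplus_indic;
  apply: ae_OmegaW => x /eqOm ->.
Qed.

Lemma ri_zero : N (fun=> 0) = 0.
Proof. by apply/(rin_eq0 normN); [split=> //; exact: measurable_cst|exact: ae_OmegaW]. Qed.

Lemma Mplus_scale (c : R) (X : R -> \bar R) :
  (0 <= c)%R -> Mplus X -> Mplus (fun x => c%:E * X x).
Proof.
move=> c0 [mX X0]; split; first exact: measurable_funeM.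
by move=> x; apply: mule_ge0; rewrite ?lee_fin.
Qed.

Lemma Mplus_sum (I : Type) (s : seq I) (F : I -> R -> \bar R) :
  (forall i, Mplus (F i)) -> Mplus (fun x => \sum_(i <- s) F i x).
Proof.
move=> MF; split; first by apply: emeasurable_sum => i; exact: (MF i).1.
by move=> x; apply: sume_ge0 => i _; exact: (MF i).2.
Qed.

Lemma ri_sum_le (I : Type) (s : seq I) (F : I -> R -> \bar R) :
  (forall i, Mplus (F i)) ->
  N (fun x => \sum_(i <- s) F i x) <= \sum_(i <- s) N (F i).
Proof.
move=> MF; elim: s => [|i s IH].
  by rewrite big_nil; under eq_fun do rewrite big_nil; rewrite ri_zero.
under eq_fun do rewrite big_cons; rewrite big_cons.
by apply: le_trans (rin_subadd normN (MF i) (Mplus_sum s MF)) _; exact: leeD2l.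
Qed.

Lemma L1_scale_indic (c : R) (A : set R) : (0 <= c)%R -> measurable A ->
  L1 (fun x => c%:E * indic_e A x) = c%:E * leb (A `&` Om).
Proof.
move=> c0 mA; have [mI I0] := Mplus_indic mA.
rewrite /L1 ge0_integralZl_EFin //; last exact: measurable_Omega.
by rewrite integral_indic //; exact: measurable_Omega.
Qed.

Section LinearFundamental.
Variable l : R.
Hypothesis l_ge0 : (0 <= l)%R.
Hypothesis fundamental_le : forall t, (0 <= t <= 1)%R -> (fundamental N t <= l * t)%R.

Lemma ri_indic_le (A : set R) : measurable A -> N (indic_e A) <= l%:E * leb (A `&` Om).
Proof.
move=> mA; have mAOm : measurable (A `&` Om) by apply: measurableI => //; exact: measurable_Omega.
have [finA A01] := lebesgue_sub_Omega mAOm (@subIsetr _ _ _).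
by rewrite ri_indicI // ri_indicE // finA -EFinM lee_fin fundamental_le.
Qed.

Lemma ri_scale_indic_le (c : R) (A : set R) : (0 <= c)%R -> measurable A ->
  N (fun x => c%:E * indic_e A x) <= l%:E * L1 (fun x => c%:E * indic_e A x).
Proof.
move=> c0 mA; rewrite (rin_homo normN (Mplus_indic mA) c0) L1_scale_indic // muleCA.
by apply: lee_wpmul2l; rewrite ?lee_fin ?ri_indic_le.
Qed.

Definition level_part (h : {nnsfun R >-> R}) (r : R) : R -> \bar R :=
  fun x => r%:E * indic_e (h @^-1` [set r]) x.

Lemma nnsfun_level_partE (h : {nnsfun R >-> R}) :
  (fun x => (h x)%:E) =
  (fun x => \sum_(r <- finmap.enum_fset (fset_set (range h))) level_part h r x).
Proof.
apply/funext => x; rewrite fimfunE fsbig_finite //= -sumEFin.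
by apply: eq_bigr => r _; rewrite EFinM.
Qed.

Lemma level_part_neg (h : {nnsfun R >-> R}) (r : R) : (r < 0)%R ->
  level_part h r = fun=> 0.
Proof.
move=> r_lt0; apply/funext => x; rewrite /level_part /indic_e indicE.
case: (boolP (x \in _)) => [/set_mem /= hx|_]; last by rewrite mule0.
by move: r_lt0; rewrite -hx ltNge fun_ge0.
Qed.

Lemma Mplus_level_part (h : {nnsfun R >-> R}) (r : R) : Mplus (level_part h r).
Proof.
have [r0|/level_part_neg->] := leP 0%R r; last by split=> //; exact: measurable_cst.
by apply: Mplus_scale r0 (Mplus_indic _); exact: measurable_funPTI.
Qed.

Lemma ri_level_part_le (h : {nnsfun R >-> R}) (r : R) :
  N (level_part h r) <= l%:E * L1 (level_part h r).
Proof.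
have [r0|/level_part_neg->] := leP 0%R r.
  by apply: ri_scale_indic_le r0 _; exact: measurable_funPTI.
by rewrite ri_zero /L1 integral0 mule0.
Qed.

Lemma ri_nnsfun_le (h : {nnsfun R >-> R}) :
  N (fun x => (h x)%:E) <= l%:E * L1 (fun x => (h x)%:E).
Proof.
rewrite nnsfun_level_partE; apply: le_trans (ri_sum_le _ (Mplus_level_part h)) _.
rewrite /L1 ge0_integral_sum; first last.
- by move=> r x _; exact: (Mplus_level_part h r).2.
- by move=> r; exact: (Mplus_level_part h r).1.
- exact: measurable_Omega.
rewrite ge0_sume_distrr; last first.
  by move=> r _; apply: integral_ge0 => x _; exact: (Mplus_level_part h r).2.
by apply: lee_sum => r _; exact: ri_level_part_le.
Qed.

Lemma ri_le_L1 (X : R -> \bar R) : Mplus X -> N X <= l%:E * L1 X.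
Proof.
move=> [mX X0]; pose h := nnsfun_approx measurable_Omega mX.
pose Xn n x := (h n x)%:E.
have MXn n : Mplus (Xn n).
  split=> [|x]; last by rewrite lee_fin.
  by apply/measurable_EFinP; exact: measurable_funTS.
have Xn_nd x m n : (m <= n)%N -> Xn m x <= Xn n x.
  by move=> mn; rewrite lee_fin; move/lefP: (nd_nnsfun_approx measurable_Omega mX mn).
have Xn_cvg x : Om x -> Xn n x @[n --> \oo] --> X x.
  by move=> Omx; exact: (cvg_nnsfun_approx measurable_Omega mX (fun x _ => X0 x) Omx).
have N_cvg := rin_fatou normN MXn (conj mX X0)
  (ae_OmegaW (fun x Omx => conj (fun n => Xn_nd x n n.+1 (leqnSn n)) (Xn_cvg x Omx))).
apply: (cvge_to_le N_cvg); apply: nearW => n.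
apply: le_trans (ri_nnsfun_le (h n)) _; apply: lee_wpmul2l; first by rewrite lee_fin.
apply: ge0_le_integral => //; first exact: measurable_Omega.
- by move=> x _; exact: (MXn n).2.
- exact: (MXn n).1.
- move=> x Omx; apply: (cvge_to_ge (Xn_cvg x Omx)).
  by exists n => // k /= nk; exact: Xn_nd.
Qed.
End LinearFundamental.

Lemma L1_le_ri : exists2 c : R, (0 < c)%R & forall X, Mplus X -> L1 X <= c%:E * N X.
Proof.
have [c L1_le] := rin_int normN measurable_Omega (@subset_refl _ Om).
exists c => //; have := L1_le _ (Mplus_indic measurable_Omega).
rewrite (rin_norm1 normN) mule1 integral_indic ?setIid; try exact: measurable_Omega.
change (leb Om <= c%:E -> (0 < c)%R).
by rewrite lebesgue_Omega lee_fin; exact: lt_le_trans ltr01.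
Qed.

End RINorm.

Lemma equiv_norms_L1 (R : realType) (N : (R -> \bar R) -> \bar R) :
  ri_function_norm N -> good_fundamental (fundamental N) ->
  finite_right_deriv0 (fundamental N) -> equiv_norms N (@L1 R).
Proof.
move=> normN phiN phiN'0.
have [l l_gt0 phi_le] := good_fundamental_le_linear phiN phiN'0.
have [c c_gt0 L1_le] := L1_le_ri normN.
apply: (equiv_norms_of_bounds l_gt0 c_gt0); first exact: rin_ge0.
- by move=> X [_ X0]; apply: integral_ge0 => x _.
- exact: ri_le_L1 (ltW l_gt0) phi_le.
- exact: L1_le.
Qed.

Theorem theorem28 (R : realType) (N1 N2 : (R -> \bar R) -> \bar R) :
  ri_function_norm N1 -> ri_function_norm N2 ->
  good_fundamental (fundamental N1) -> good_fundamental (fundamental N2) ->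
  finite_right_deriv0 (fundamental N1) -> finite_right_deriv0 (fundamental N2) ->
  equiv_norms N1 N2 /\ equiv_norms N1 (@L1 R) /\ equiv_norms N2 (@L1 R).
Proof.
move=> normN1 normN2 phiN1 phiN2 phiN1'0 phiN2'0.
have N1L1 := equiv_norms_L1 normN1 phiN1 phiN1'0.
have N2L1 := equiv_norms_L1 normN2 phiN2 phiN2'0.
by split; [exact: equiv_norms_trans N1L1 (equiv_norms_sym N2L1)|split].
Qed.
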